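(* Fix an integer $n\ge 0$ and $\mathbb K\in\{\mathbb R,\mathbb C\}$. Let $\mathcal B^0\supset\mathcal B^1\supset\cdots\supset\mathcal B^{n+1}$ be linear subspaces, and let $\mathcal L=\mathcal L_0,\dots,\mathcal L_n$ and $\mathcal L(\epsilon,\cdot):\mathcal B^0\to\mathcal B^0$ ($\epsilon\in(0,1)$) be linear operators satisfying conditions (I), (II), (III) of the context. Assume also: (a) each $\mathcal B^k$ is a Banach space (with norm $\|\cdot\|_{\mathcal B^k}$); (b) $\nu$ is a bounded linear functional on $\mathcal B^0$, $\mathcal L_j$ is a bounded operator $\mathcal B^i\to\mathcal B^{i-j}$ for $j=0,\dots,n$ and $i=j,\dots,n+1$, $\sup_{\epsilon}\|\kappa(\epsilon,\cdot)\|_{\mathcal B^0\to\mathbb K}<+\infty$, and $\mathcal R_\lambda$ is bounded as an operator $\mathcal B^1\to\mathcal B^0$ and as an operator $\mathcal B^j\to\mathcal B^j$ for $j=1,\dots,n+1$; (c) $\lim_{\epsilon\to0}\|\tilde{\mathcal L}_j(\epsilon,\cdot)\|_{\mathcal B^{j+1}\to\mathcal B^0}=0$ for each $j=0,\dots,n$. Put $\|f\|_k:=\max_{1\le i\le k}\|f\|_{\mathcal B^i}$ and $\mathcal B^k_1:=(\mathcal B^k,\|\cdot\|_k)$. Then each $\kappa_k$ is a bounded linear functional on $\mathcal B^k_1$ and $\|\tilde\kappa_k(\epsilon,\cdot)\|_{\mathcal B_1^{k+1}\to\mathbb K}\to0$ as $\epsilon\to0$ for each $0\le k\le n$. Moreover,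 if there is $1_{\mathcal B}\in\mathcal B^{n+1}$ with $\nu(1_{\mathcal B})=\nu(\epsilon,1_{\mathcal B})=1$ for all $\epsilon$ and $\sup_\epsilon|\nu(\epsilon,h)|<+\infty$, then each $\nu_k$ is a bounded linear functional on $\mathcal B^k_1$ and $\|\tilde\nu_k(\epsilon,\cdot)\|_{\mathcal B_1^{k+1}\to\mathbb K}\to0$.
   Context: Conditions. (I) For each $j=0,\dots,n$ and $i=j,\dots,n$, $\mathcal L_j$ maps $\mathcal B^i$ linearly into $\mathcal B^{i-j}$. (II) $\mathcal L:\mathcal B^0\to\mathcal B^0$ decomposes as $\mathcal L=\lambda(h\otimes\nu)+\mathcal R$ with $(\lambda,h,\nu)\in\mathbb K\times\mathcal B^{n+1}\times(\mathcal B^0)^*$ ($(\mathcal B^0)^*$ = linear functionals), $\lambda\neq0$, $\nu\circ\mathcal L=\lambda\nu$, $\mathcal Lh=\lambda h$, $\nu(h)=1$, where $(h\otimes\nu)f=\nu(f)h$; and there is a linear subspace $\mathcal D^0$ with $\mathcal B^1\subset\mathcal D^0\subset\mathcal B^0$ such that every $f\in\mathcal D^0$ has exactly one $g\in\mathcal B^0$ with $(\mathcal R-\lambda\mathcal I)g=f$; this inverse $\mathcal R_\lambda:\mathcal D^0\to\mathcal B^0$ satisfies $\mathcal R_\lambda\mathcal B^i\subset\mathcal B^i$ for $1\le i\le n+1$. (III) For each $\epsilon$ there are $\lambda(\epsilon)\in\mathbb K$, $\nu(\epsilon,\cdot)\in(\mathcal B^0)^*$ with $\nu(\epsilon,\mathcal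 L(\epsilon,f))=\lambda(\epsilon)\nu(\epsilon,f)$ for all $f$ and $\nu(\epsilon,h)\ne0$. Notation. $\tilde{\mathcal L}_j(\epsilon,\cdot):=(\mathcal L(\epsilon,\cdot)-\mathcal L-\sum_{i=1}^j\mathcal L_i\epsilon^i)/\epsilon^j$; $\kappa(\epsilon,f):=\nu(\epsilon,f)/\nu(\epsilon,h)$. Coefficients: $\kappa_0=\nu$, and recursively for $k\ge1$, $\lambda_k=\sum_{j=1}^k\kappa_{k-j}(\mathcal L_jh)$, $\kappa_k(f)=\sum_{j=1}^k\kappa_{k-j}((\lambda_j\mathcal I-\mathcal L_j)\mathcal R_\lambda f)$. Remainders, for $0\le k\le n$: $\tilde\lambda_k(\epsilon):=(\lambda(\epsilon)-\lambda-\sum_{i=1}^k\lambda_i\epsilon^i)/\epsilon^k$ and $\tilde\kappa_k(\epsilon,f):=(\kappa(\epsilon,f)-\nu(f)-\sum_{i=1}^k\kappa_i(f)\epsilon^i)/\epsilon^k$ for $f\in\mathcal B^{k+1}$. Given $1_{\mathcal B}$, set $\nu_0=\nu$ and $\nu_k=\kappa_k+\sum_{i=1}^k\Big(\sum_{l=1}^i\sum_{\substack{j_1,\dots,j_l\ge1\\ j_1+\cdots+j_l=i}}(-1)^l\kappa_{j_1}(1_{\mathcal B})\cdots\kappa_{j_l}(1_{\mathcal B})\Big)\kappa_{k-i}$, and $\tilde\nu_k(\epsilon,f):=(\nu(\epsilon,f)-\sum_{i=0}^k\nu_i(f)\epsilon^i)/\epsilon^k$. $\|\cdot\|_{X\to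 Y}$ denotes operator norm. *)

From HB Require Import structures.
From mathcomp Require Import all_boot all_order all_algebra.
From mathcomp Require Import complex.
From mathcomp Require Import reals.
Set Implicit Arguments. Unset Strict Implicit. Unset Printing Implicit Defensive.
Import Order.TTheory GRing.Theory Num.Theory.
Local Open Scope ring_scope.

Definition Kfield (R : realType) (isC : bool) : numFieldType :=
  if isC then (R[i] : numFieldType) else (R : numFieldType).

Section Defs.
Variables (K : numFieldType) (V : lmodType K).

Definition subspace (A : pred V) : Prop :=
  0 \in A /\ forall (a : K) x y, x \in A -> y \in A -> a *: x + y \in A.

Definition linear_on (W : lmodType K) (A : pred V) (f : V -> W) : Prop :=
  forall (a : K) x y, x \in A -> y \in A -> f (a *: x + y) = a *: f x + f y.

Definition linear_fun (A : pred V) (phi : V -> K) : Prop :=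
  forall (a : K) x y, x \in A -> y \in A -> phi (a *: x + y) = a * phi x + phi y.

(* N is a norm on A (norm values in K, nonnegative hence real) *)
Definition norm_on (A : pred V) (N : V -> K) : Prop :=
  [/\ forall x, x \in A -> 0 <= N x,
      forall x, x \in A -> N x = 0 -> x = 0,
      forall (a : K) x, x \in A -> N (a *: x) = `|a| * N x
    & forall x y, x \in A -> y \in A -> N (x + y) <= N x + N y].

Definition complete_on (A : pred V) (N : V -> K) : Prop :=
  forall u : nat -> V, (forall m, u m \in A) ->
    (forall e : K, 0 < e -> exists M, forall p q, (M <= p)%N -> (M <= q)%N ->
        N (u p - u q) < e) ->
    exists2 l, l \in A & forall e : K, 0 < e -> exists M, forall p, (M <= p)%N ->
        N (u p - l) < e.

Definition banach (A : pred V) (N : V -> K) : Prop :=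
  [/\ subspace A, norm_on A N & complete_on A N].

Definition bounded_op (A : pred V) (NA : V -> K) (B : pred V) (NB : V -> K)
  (T : V -> V) : Prop :=
  (forall x, x \in A -> T x \in B) /\
  exists C : K, forall x, x \in A -> NB (T x) <= C * NA x.

Definition bounded_fun (A : pred V) (NA : V -> K) (phi : V -> K) : Prop :=
  exists C : K, forall x, x \in A -> `|phi x| <= C * NA x.

Definition op_norm_to0 (A : pred V) (NA : V -> K) (NB : V -> K)
  (T : K -> V -> V) : Prop :=
  forall d : K, 0 < d -> exists2 eta : K, 0 < eta &
    forall eps : K, 0 < eps -> eps < 1 -> eps < eta ->
      forall x, x \in A -> NB (T eps x) <= d * NA x.

Definition fun_norm_to0 (A : pred V) (NA : V -> K) (phi : K -> V -> K) : Prop :=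
  forall d : K, 0 < d -> exists2 eta : K, 0 < eta &
    forall eps : K, 0 < eps -> eps < 1 -> eps < eta ->
      forall x, x \in A -> `|phi eps x| <= d * NA x.

(* ||f||_k := max_{1<=i<=k} ||f||_{B^i}  (for k = 0 we use ||f||_{B^0}) *)
Definition normk (N : nat -> V -> K) (k : nat) (f : V) : K :=
  if k == 0%N then N 0%N f else \big[Num.max/0]_(1 <= i < k.+1) N i f.

Variables (L : nat -> V -> V) (nu : V -> K) (h : V) (Rlam : V -> V).

Definition lamT (kap : nat -> V -> K) (j : nat) : K :=
  \sum_(1 <= i < j.+1) kap (j - i)%N (L i h).

(* kapT m i = kappa_i for i <= m *)
Fixpoint kapT (m : nat) : nat -> V -> K :=
  match m with
  | 0%N => fun _ => nu
  | m'.+1 => let kp := kapT m' in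
      fun i => if (i <= m')%N then kp i else
        fun f => \sum_(1 <= j < m'.+2)
                   kp (m'.+1 - j)%N (lamT kp j *: Rlam f - L j (Rlam f))
  end.

Definition kappa_coef (k : nat) : V -> K := kapT k k.
Definition lambda_coef (k : nat) : K := lamT (kapT k) k.

Definition comp_coef (one : V) (i : nat) : K :=
  \sum_(1 <= l < i.+1)
    \sum_(js : {ffun 'I_l -> 'I_i.+1} |
           [forall m, (0 < (js m : nat))%N] && ((\sum_(m < l) (js m : nat))%N == i))
      (-1) ^+ l * \prod_(m < l) kappa_coef (js m) one.

Definition nu_coef (one : V) (k : nat) : V -> K :=
  fun f => kappa_coef k f +
           \sum_(1 <= i < k.+1) comp_coef one i * kappa_coef (k - i)%N f.

End Defs.

(* Write [kappa e f] for [nu_e f / nu_e h].  For [f] in [B^1], apply [kappa e]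
   to [f = L (R f) - lam nu(R f) h - lam R f]: since [kappa e h = 1] and
   [kappa e (L_e g) = lam_e kappa e g], this gives
   [kappa e f - nu f = (lam_e - lam) kappa e (R f) - kappa e ((L_e - L) (R f))]
   with [lam_e - lam = kappa e ((L_e - L) h)].  Expanding [L_e - L] to order
   [k] by (c), the order-[k] remainder of [kappa e f] becomes a combination of
   lower-order remainders evaluated at [R f] and [L_i (R f)], so an induction
   on [k] shows that it is [o(e^k)] in the norm [||.||_(k+1)]; this is where
   the recursion defining [kappa_k] comes from.  For [nu_e], write
   [nu_e f = nu_e h * kappa e f] and [nu_e h = 1 / kappa e 1_B]: the
   composition sums in [nu_k] are the coefficients of [1 / (1 + Q)] with
   [Q = sum_(j >= 1) kappa_j(1_B) e^j], and [nu_k] is a Cauchy product. *)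

From HB Require Import structures.
From mathcomp Require Import all_boot all_order all_algebra.
From mathcomp Require Import complex.
From mathcomp Require Import reals.
From mathcomp Require Import ring zify.
Import Order.TTheory GRing.Theory Num.Theory.
Local Open Scope ring_scope.
Set Implicit Arguments. Unset Strict Implicit. Unset Printing Implicit Defensive.

(* lia becomes very slow when the context holds many hypotheses over the
   scalar field, so we first keep only the arithmetic facts on nat. *)
Ltac clear_non_nat := repeat match goal with H : ?T |- _ =>
  lazymatch T with
  | nat => fail
  | is_true (_ <= _)%N => fail
  | is_true (_ && _) => fail
  | is_true (@eq_op _ ?x _) =>
      let t := type of x in tryif unify t nat then fail else clear H
  | is_true (~~ @eq_op _ ?x _) =>
      let t := type of x in tryif unify t nat then fail else clear H
  | @eq nat _ _ => fail
  | ~ @eq nat _ _ => fail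
  | _ => clear H
  end end.
Ltac nat_lia := clear_non_nat; lia.

Section SubspaceLinearity.
Variables (K : numFieldType) (V : lmodType K).
Implicit Types (A : pred V) (x y : V) (a : K).

Lemma subspace0 A : subspace A -> 0 \in A. Proof. by case. Qed.

Lemma subspaceD A x y : subspace A -> x \in A -> y \in A -> x + y \in A.
Proof. by move=> [_ sA] xA yA; have := sA 1 x y xA yA; rewrite scale1r. Qed.

Lemma subspaceZ A a x : subspace A -> x \in A -> a *: x \in A.
Proof. by move=> [A0 sA] xA; have := sA a x 0 xA A0; rewrite addr0. Qed.

Lemma subspaceB A x y : subspace A -> x \in A -> y \in A -> x - y \in A.
Proof. by move=> sA xA yA; rewrite subspaceD // -scaleN1r subspaceZ. Qed.

Lemma subspace_sum A (I : Type) (r : seq I) (P : pred I) (F : I -> V) :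
  subspace A -> (forall i, P i -> F i \in A) -> \sum_(i <- r | P i) F i \in A.
Proof.
move=> sA FA; elim: r => [|i r IH]; first by rewrite big_nil subspace0.
by rewrite big_cons; case: ifP => Pi //; rewrite subspaceD // FA.
Qed.

Lemma linear_fun0 A (phi : V -> K) : subspace A -> linear_fun A phi -> phi 0 = 0.
Proof.
move=> sA phi_lin; have := phi_lin 1 0 0 (subspace0 sA) (subspace0 sA).
by rewrite scale1r addr0 mul1r => /eqP; rewrite addrC -subr_eq subrr eq_sym => /eqP.
Qed.

Lemma linear_funD A (phi : V -> K) x y : linear_fun A phi ->
  x \in A -> y \in A -> phi (x + y) = phi x + phi y.
Proof. by move=> phi_lin xA yA; have := phi_lin 1 x y xA yA; rewrite scale1r mul1r. Qed.

Lemma linear_funZ A (phi : V -> K) a x : subspace A -> linear_fun A phi ->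
  x \in A -> phi (a *: x) = a * phi x.
Proof.
move=> sA phi_lin xA; have := phi_lin a x 0 xA (subspace0 sA).
by rewrite addr0 (linear_fun0 sA phi_lin) addr0.
Qed.

Lemma linear_funB A (phi : V -> K) x y : subspace A -> linear_fun A phi ->
  x \in A -> y \in A -> phi (x - y) = phi x - phi y.
Proof.
move=> sA phi_lin xA yA; rewrite -scaleN1r (linear_funD phi_lin) ?subspaceZ //.
by rewrite (linear_funZ _ sA phi_lin) // mulN1r.
Qed.

Lemma linear_fun_sum A (phi : V -> K) (I : Type) (r : seq I) (P : pred I)
    (F : I -> V) :
  subspace A -> linear_fun A phi -> (forall i, P i -> F i \in A) ->
  phi (\sum_(i <- r | P i) F i) = \sum_(i <- r | P i) phi (F i).
Proof.
move=> sA phi_lin FA; elim: r => [|i r IH]; first by rewrite !big_nil (linear_fun0 sA).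
rewrite !big_cons; case: ifP => Pi //.
by rewrite (linear_funD phi_lin) ?IH ?FA ?subspace_sum.
Qed.

Lemma linear_on0 A (f : V -> V) : subspace A -> linear_on A f -> f 0 = 0.
Proof.
move=> sA f_lin; have := f_lin 1 0 0 (subspace0 sA) (subspace0 sA).
by rewrite !scale1r addr0 => /eqP; rewrite addrC -subr_eq subrr eq_sym => /eqP.
Qed.

Lemma linear_onD A (f : V -> V) x y : linear_on A f ->
  x \in A -> y \in A -> f (x + y) = f x + f y.
Proof. by move=> f_lin xA yA; have := f_lin 1 x y xA yA; rewrite !scale1r. Qed.

Lemma linear_onZ A (f : V -> V) a x : subspace A -> linear_on A f ->
  x \in A -> f (a *: x) = a *: f x.
Proof.
move=> sA f_lin xA; have := f_lin a x 0 xA (subspace0 sA).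
by rewrite addr0 (linear_on0 sA f_lin) addr0.
Qed.

Lemma norm_onZB A (M : V -> K) a x y : subspace A -> norm_on A M ->
  x \in A -> y \in A -> M (a *: x - y) <= `|a| * M x + M y.
Proof.
move=> sA [_ _ MZ MD] xA yA.
have MN : M (- y) = M y by rewrite -scaleN1r MZ // normrN normr1 mul1r.
by rewrite -MZ // -MN MD // ?subspaceZ // -scaleN1r subspaceZ.
Qed.

End SubspaceLinearity.

Lemma scale_add_sub3 (R : pzRingType) (V : lmodType R) (a : R) (u1 u2 u3 v1 v2 v3 : V) :
  (a *: u1 + v1) - (a *: u2 + v2) - (a *: u3 + v3) =
  a *: (u1 - u2 - u3) + (v1 - v2 - v3).
Proof.
rewrite !scalerBr !opprD !addrA; congr (_ + _).
by rewrite [LHS]addrAC; congr (_ + _); rewrite (addrAC (a *: u1) v1) addrAC.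
Qed.

Lemma scale_add_sub2 (R : pzRingType) (V : lmodType R) (a : R) (u1 u2 v1 v2 : V) :
  (a *: u1 + v1) - (a *: u2 + v2) = a *: (u1 - u2) + (v1 - v2).
Proof. by rewrite scalerBr opprD !addrA; congr (_ + _); rewrite addrAC. Qed.

Lemma ler_normC_mul (K : numDomainType) (a b C : K) :
  0 <= a -> 0 <= b -> a <= C * b -> a <= `|C| * b.
Proof.
move=> a0 b0 le_a; have Cb0 : 0 <= C * b := le_trans a0 le_a.
by rewrite -(ger0_norm b0) -normrM ger0_norm.
Qed.

Lemma finite_uniform_bound (K : numDomainType) (T : Type) (P : T -> Prop)
    (a : nat -> T -> K) (b : T -> K) m :
  (forall x, P x -> 0 <= b x) ->
  (forall p, (p < m)%N -> exists2 C, 0 <= C & forall x, P x -> a p x <= C * b x) ->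
  exists2 C, 0 <= C & forall p, (p < m)%N -> forall x, P x -> a p x <= C * b x.
Proof.
move=> b0; elim: m => [|m IH] abC; first by exists 0.
have [p ltpm|C1 C10 abC1] := IH; first by apply: abC; rewrite ltnS ltnW.
have [C2 C20 abC2] := abC m (ltnSn m).
exists (C1 + C2) => [|p]; first by rewrite addr_ge0.
rewrite ltnS leq_eqVlt => /orP[/eqP-> x Px|ltpm x Px].
  by apply: le_trans (abC2 x Px) _; rewrite ler_wpM2r ?b0 // lerDr.
by apply: le_trans (abC1 p ltpm x Px) _; rewrite ler_wpM2r ?b0 // lerDl.
Qed.

Lemma norm_sum_nat_le (K : numDomainType) a b (F : nat -> K) (c : K) :
  (forall i, (a <= i < b)%N -> `|F i| <= c) -> `|\sum_(a <= i < b) F i| <= c *+ (b - a).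
Proof.
move=> Fc; apply: le_trans (ler_norm_sum _ _ _) _.
by rewrite -sumr_const_nat; apply: ler_sum_nat.
Qed.

Lemma bigmax_nonneg (K : numDomainType) (F : nat -> K) (s : seq nat) :
  (forall i, i \in s -> 0 <= F i) ->
  [/\ 0 <= \big[Num.max/0]_(i <- s) F i,
      forall i, i \in s -> F i <= \big[Num.max/0]_(i <- s) F i
    & forall c, 0 <= c -> (forall i, i \in s -> F i <= c) ->
        \big[Num.max/0]_(i <- s) F i <= c].
Proof.
elim: s => [|a s IH] F0; first by rewrite big_nil.
have [|IH0 IHle IHge] := IH; first by move=> i si; rewrite F0 // inE si orbT.
have Fa0 : 0 <= F a by rewrite F0 ?inE ?eqxx.
have cmp : (F a >=< \big[Num.max/0]_(i <- s) F i)%O.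
  by apply: real_comparable; apply: ger0_real.
rewrite big_cons; split.
- by rewrite comparable_le_max // Fa0.
- move=> i; rewrite inE comparable_le_max // => /orP[/eqP->|si]; first by rewrite lexx.
  by rewrite IHle // orbT.
- move=> c c0 Fc; rewrite comparable_ge_max // Fc ?inE ?eqxx //=.
  by apply: IHge => // i si; rewrite Fc // inE si orbT.
Qed.


Lemma sum_antidiagonal (Z : nmodType) (G : nat -> nat -> Z) k :
  \sum_(0 <= s < k.+1) \sum_(0 <= m < (k - s)%N.+1) G s m =
  \sum_(0 <= t < k.+1) \sum_(0 <= s < t.+1) G s (t - s)%N.
Proof.
elim: k => [|k IH]; first by rewrite !big_nat1.
rewrite big_nat_recr //= [in RHS]big_nat_recr //= -IH subnn big_nat1.
rewrite (eq_big_nat _ _ (F2 := fun s =>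
  \sum_(0 <= m < (k - s)%N.+1) G s m + G s (k.+1 - s)%N)); last first.
  by move=> s /andP[_ ltsk]; rewrite subSn // big_nat_recr //= subSn.
rewrite big_split /= -addrA; congr (_ + _).
by rewrite [in RHS]big_nat_recr //= subnn.
Qed.

Lemma sum_antidiagonal1 (Z : nmodType) (G : nat -> nat -> Z) k :
  \sum_(1 <= s < k.+1) \sum_(0 <= m < (k - s)%N.+1) G s m =
  \sum_(1 <= t < k.+1) \sum_(1 <= s < t.+1) G s (t - s)%N.
Proof.
pose G0 s m := if s == 0%N then 0 else G s m.
have E := sum_antidiagonal G0 k.
rewrite big_ltn // big1 // add0r [RHS]big_ltn // big_nat1 /= add0r in E.
have G0E s m : (0 < s)%N -> G0 s m = G s m by rewrite /G0; case: s.
transitivity (\sum_(1 <= s < k.+1) \sum_(0 <= m < (k - s)%N.+1) G0 s m).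
  by apply: eq_big_nat => s /andP[s0 _]; apply: eq_bigr => m _; rewrite G0E.
rewrite E; apply: eq_big_nat => t /andP[t0 _].
by rewrite big_ltn // add0r; apply: eq_big_nat => s /andP[s0 _]; rewrite G0E.
Qed.

Lemma sum_square_antidiagonal (Z : nmodType) (F : nat -> nat -> Z) k :
  \sum_(0 <= i < k.+1) \sum_(0 <= j < k.+1) F i j =
  \sum_(0 <= t < k.+1) \sum_(0 <= i < t.+1) F i (t - i)%N +
  \sum_(0 <= i < k.+1) \sum_(0 <= j < k.+1 | (k < i + j)%N) F i j.
Proof.
rewrite -sum_antidiagonal -big_split /=; apply: eq_big_nat => i /andP[_ ltik].
rewrite (bigID (fun j => (k < i + j)%N)) /= addrC; congr (_ + _).
rewrite (big_nat_widen 0 (k - i).+1 k.+1) ?ltnS ?leq_subr //.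
by apply: eq_bigl => j; lia.
Qed.

Lemma mul_sum_powers (R : comPzRingType) (a b : nat -> R) (x : R) k :
  (\sum_(0 <= i < k.+1) a i * x ^+ i) * (\sum_(0 <= j < k.+1) b j * x ^+ j) =
  \sum_(0 <= t < k.+1) (\sum_(0 <= i < t.+1) a i * b (t - i)%N) * x ^+ t +
  \sum_(0 <= i < k.+1) \sum_(0 <= j < k.+1 | (k < i + j)%N) (a i * x ^+ i) * (b j * x ^+ j).
Proof.
rewrite mulr_suml (eq_bigr (fun i => \sum_(0 <= j < k.+1) (a i * x ^+ i) * (b j * x ^+ j)));
  last by move=> i _; rewrite mulr_sumr.
rewrite sum_square_antidiagonal; congr (_ + _); apply: eq_bigr => t _.
rewrite mulr_suml; apply: eq_big_nat => i /andP[_ lt_it].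
by rewrite mulrACA -exprD subnKC //; lia.
Qed.

(** * Inverting a power series *)

Section InverseSeries.
Variable K : comNzRingType.
Implicit Types (p : nat -> K) (Q : {poly K}).

Definition series_poly p M : {poly K} := \sum_(1 <= j < M.+1) p j *: 'X^j.

Lemma coef_series_poly p M j :
  (series_poly p M)`_j = if (0 < j <= M)%N then p j else 0.
Proof.
elim: M => [|M IH]; first by rewrite /series_poly big_geq // coef0 ifF //; lia.
rewrite /series_poly big_nat_recr //= -/(series_poly p M) coefD IH coefZ coefXn.
have [->|neq_jM] /= := eqVneq j M.+1; first by rewrite ltnn ltnSn mulr1n mulr1 add0r.
by rewrite mulr0n mulr0 addr0; congr (if _ then _ else _); lia.
Qed.

Lemma coef_exp_lt Q : Q`_0 = 0 -> forall l t, (t < l)%N -> (Q ^+ l)`_t = 0.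
Proof.
move=> Q0; elim=> [//|l IH] t ltl.
rewrite exprS coefM big1 // => [[a lta]] _ /=.
by case: a lta => [|a] lta; [rewrite Q0 mul0r | rewrite IH ?mulr0 //; lia].
Qed.

Lemma coef_exp_eq Q1 Q2 i : (forall j, (j <= i)%N -> Q1`_j = Q2`_j) ->
  forall l j, (j <= i)%N -> (Q1 ^+ l)`_j = (Q2 ^+ l)`_j.
Proof.
move=> Q12; elim=> [|l IH] j leji; first by rewrite !expr0.
rewrite !exprS !coefM; apply: eq_bigr => [[a lta]] _ /=.
by rewrite Q12 ?IH //; lia.
Qed.

(* [inv_coef p M t] is the [t]-th coefficient of [1 / (1 + Q)], where
   [Q = series_poly p M], computed from the truncated geometric series. *)
Definition inv_coef p M t :=
  \sum_(0 <= l < t.+1) (-1) ^+ l * ((series_poly p M) ^+ l)`_t.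

Lemma inv_coef0 p M : inv_coef p M 0 = 1.
Proof. by rewrite /inv_coef big_nat1 !expr0 coef1 mul1r. Qed.

Lemma prod_scaleXn (I : finType) (c : I -> K) (e : I -> nat) :
  \prod_i (c i *: 'X^(e i)) = (\prod_i c i) *: 'X^(\sum_i e i).
Proof.
under eq_bigr do rewrite -mul_polyC.
by rewrite big_split /= -(rmorph_prod polyC) prodrXr mul_polyC.
Qed.

Lemma sum_compositions_coef p t l :
  \sum_(js : {ffun 'I_l -> 'I_t.+1} | [forall m, (0 < (js m : nat))%N] &&
           ((\sum_(m < l) (js m : nat))%N == t)) \prod_(m < l) p (js m)
  = ((series_poly p t) ^+ l)`_t.
Proof.
have QE : series_poly p t =
    \sum_(j < t.+1) (if (0 < (j : nat))%N then p j *: 'X^j else 0).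
  rewrite -(big_mkord xpredT (fun j => if (0 < j)%N then p j *: 'X^j else 0)).
  by rewrite big_ltn // /= add0r; apply: eq_big_nat => j /andP[-> _].
have -> : forall Q : {poly K}, Q ^+ l = \prod_(m < l) Q.
  by move=> Q; rewrite prodr_const card_ord.
rewrite QE bigA_distr_bigA coef_sum [LHS]big_mkcond /=.
apply: eq_bigr => js _.
have [js_pos|] /= := boolP [forall m, (0 < (js m : nat))%N].
  rewrite (eq_bigr (fun m => p (js m) *: 'X^(js m))) => [|m _]; last first.
    by rewrite (forallP js_pos).
  by rewrite prod_scaleXn coefZ coefXn eq_sym; case: eqP; rewrite ?mulr1 ?mulr0.
rewrite negb_forall => /existsP [m0 js_m0].
by rewrite (bigD1 m0) //= (negbTE js_m0) mul0r coef0.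
Qed.

(* Grouping the compositions [j_1 + ... + j_l = t] by [l] expands
   [1 / (1 + Q)] as the geometric series [sum_l (-Q) ^+ l]. *)
Lemma compositions_inv_coef p M t : (0 < t <= M)%N ->
  \sum_(1 <= l < t.+1)
    \sum_(js : {ffun 'I_l -> 'I_t.+1} | [forall m, (0 < (js m : nat))%N] &&
           ((\sum_(m < l) (js m : nat))%N == t))
      (-1) ^+ l * \prod_(m < l) p (js m)
  = inv_coef p M t.
Proof.
move=> t_range; rewrite /inv_coef [RHS]big_ltn // expr0 mul1r expr0 coef1.
have -> : (t == 0%N) = false by lia.
rewrite mulr0n add0r; apply: eq_big_nat => l _.
rewrite -big_distrr /= sum_compositions_coef; congr (_ * _).
apply: (@coef_exp_eq _ _ t) => // j lejt.
by rewrite !coef_series_poly; congr (if _ then _ else _); lia.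
Qed.

Lemma inv_coef_rec p M t : p 0%N = 1 -> (0 < t <= M)%N ->
  \sum_(0 <= j < t.+1) p j * inv_coef p M (t - j) = 0.
Proof.
move=> p0 t_range; set Q := series_poly p M.
have Q0 : Q`_0 = 0 by rewrite coef_series_poly.
have geom : (1 + Q) * \sum_(l < M.+1) ((-1) *: Q) ^+ l = 1 - ((-1) *: Q) ^+ M.+1.
  by rewrite -opprB subrX1 -mulNr opprB scaleN1r opprK addrC.
have := congr1 (fun P : {poly K} => P`_t) geom.
rewrite coefB coef1 exprZn coefZ (coef_exp_lt Q0) ?mulr0 ?subr0; last by lia.
have -> : (t == 0%N) = false by lia.
rewrite mulr0n => geom_t; rewrite -[RHS]geom_t coefM big_mkord.
apply: eq_bigr => [[j ltjt]] _ /=.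
congr (_ * _).
  rewrite coefD coef1 coef_series_poly; case: (j =P 0%N) => [->|/eqP j0] /=.
    by rewrite addr0 p0.
  by rewrite add0r ifT //; lia.
rewrite coef_sum -(big_mkord xpredT (fun l => (((-1) *: Q) ^+ l)`_(t - j))).
rewrite (big_cat_nat (n := (t - j).+1)) //=; last by lia.
rewrite [X in _ = _ + X]big1_seq ?addr0; last first.
  move=> l /andP[_]; rewrite mem_index_iota => l_range.
  by rewrite exprZn coefZ coef_exp_lt ?mulr0 //; lia.
by apply: eq_bigr => l _; rewrite exprZn coefZ.
Qed.

End InverseSeries.

(** * Uniform little-o estimates *)

Section LittleO.
Variables (K : numFieldType) (V : lmodType K).
Implicit Types (A : pred V) (M : V -> K) (r : K -> V -> K) (C d : K).

Definition little_o k A M r :=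
  forall d, 0 < d -> exists2 eta : K, 0 < eta &
    forall e : K, 0 < e -> e < 1 -> e < eta -> forall x, x \in A ->
      `|r e x| <= d * (e ^+ k * M x).

Definition little_o_scalar k (s : K -> K) :=
  little_o k predT (fun _ => 1) (fun e _ => s e).

Lemma add1_gt0 C : 0 <= C -> 0 < C + 1.
Proof. by move=> C0; rewrite ltr_wpDl. Qed.

Lemma ler_mul_shrink C d X : 0 <= C -> 0 <= d -> 0 <= X ->
  C * (d / (C + 1) * X) <= d * X.
Proof.
move=> C0 d0 X0; have -> : C * (d / (C + 1) * X) = d * X * (C / (C + 1)) by ring.
rewrite -[leRHS]mulr1 ler_wpM2l ?mulr_ge0 //.
by rewrite ler_pdivrMr ?add1_gt0 // mul1r lerDl.
Qed.

Lemma little_o_ext k A M r1 r2 :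
  (forall e, 0 < e -> e < 1 -> forall x, x \in A -> r1 e x = r2 e x) ->
  little_o k A M r1 -> little_o k A M r2.
Proof.
move=> r12 o1 d d0; have [eta eta0 H] := o1 d d0.
by exists eta => // e e0 e1 lt_eta x xA; rewrite -r12 //; apply: H.
Qed.

Lemma little_o_shift k j A M r : little_o k A M r ->
  little_o (j + k) A M (fun e x => e ^+ j * r e x).
Proof.
move=> o d d0; have [eta eta0 H] := o d d0.
exists eta => // e e0 e1 lt_eta x xA; have ej0 := exprn_ge0 j (ltW e0).
rewrite normrM (ger0_norm ej0) exprD.
have -> : d * (e ^+ j * e ^+ k * M x) = e ^+ j * (d * (e ^+ k * M x)) by ring.
by rewrite ler_wpM2l // H.
Qed.

Lemma little_o_comp k A A' M M' r (w : V -> V) C :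
  (forall x, x \in A -> 0 <= M x) -> 0 <= C ->
  (forall x, x \in A -> w x \in A') ->
  (forall x, x \in A -> M' (w x) <= C * M x) ->
  little_o k A' M' r -> little_o k A M (fun e x => r e (w x)).
Proof.
move=> M0 C0 wA wM o d d0.
have d'0 : 0 < d / (C + 1) by rewrite divr_gt0 ?add1_gt0.
have [eta eta0 H] := o _ d'0; exists eta => // e e0 e1 lt_eta x xA.
have ek0 : 0 <= e ^+ k by rewrite exprn_ge0 ?ltW.
apply: le_trans (H e e0 e1 lt_eta _ (wA x xA)) _.
apply: le_trans (ler_wpM2l (ltW d'0) (ler_wpM2l ek0 (wM x xA))) _.
rewrite (_ : _ * (_ * (C * _)) = C * (d / (C + 1) * (e ^+ k * M x))); last by ring.
by apply: ler_mul_shrink => //; [exact: ltW | rewrite mulr_ge0 ?M0].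
Qed.

Lemma little_o_at k A M r x0 : x0 \in A -> 0 <= M x0 ->
  little_o k A M r -> little_o_scalar k (fun e => r e x0).
Proof.
move=> x0A Mx00 o d d0.
have d'0 : 0 < d / (M x0 + 1) by rewrite divr_gt0 ?add1_gt0.
have [eta eta0 H] := o _ d'0; exists eta => // e e0 e1 lt_eta x _.
apply: le_trans (H e e0 e1 lt_eta x0 x0A) _.
rewrite mulr1 (_ : _ * (_ * M x0) = M x0 * (d / (M x0 + 1) * e ^+ k)); last by ring.
by apply: ler_mul_shrink => //; [exact: ltW | rewrite exprn_ge0 ?ltW].
Qed.

Lemma little_oN k A M r : little_o k A M r -> little_o k A M (fun e x => - r e x).
Proof.
move=> o d d0; have [eta eta0 H] := o d d0.
by exists eta => // e e0 e1 lt_eta x xA; rewrite normrN H.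
Qed.

Lemma little_oD k A M r1 r2 : little_o k A M r1 -> little_o k A M r2 ->
  little_o k A M (fun e x => r1 e x + r2 e x).
Proof.
move=> o1 o2 d d0; have d20 : 0 < d / 2 by rewrite divr_gt0 // ltr0n.
have [eta1 eta10 H1] := o1 _ d20; have [eta2 eta20 H2] := o2 _ d20.
have cmp : (eta1 >=< eta2)%O by apply: real_comparable; apply: gtr0_real.
exists (Num.min eta1 eta2); first by rewrite comparable_lt_min // eta10 eta20.
move=> e e0 e1; rewrite comparable_lt_min // => /andP[lt_eta1 lt_eta2] x xA.
apply: le_trans (ler_normD _ _) _; rewrite {1}(splitr d) mulrDl.
by apply: lerD; [exact: H1 | exact: H2].
Qed.

Lemma little_oB k A M r1 r2 : little_o k A M r1 -> little_o k A M r2 ->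
  little_o k A M (fun e x => r1 e x - r2 e x).
Proof. by move=> o1 o2; apply: little_oD o1 (little_oN o2). Qed.

Lemma little_o_fun_norm_to0 k A M r :
  little_o k A M r -> fun_norm_to0 A M (fun e x => e ^- k * r e x).
Proof.
move=> o d d0; have [eta eta0 H] := o d d0.
exists eta => // e e0 e1 lt_eta x xA.
have ek0 : 0 < e ^+ k by rewrite exprn_gt0.
have iek0 : 0 <= (e ^+ k)^-1 by rewrite invr_ge0 ltW.
rewrite normrM (ger0_norm iek0) -(ler_pM2l ek0) mulrA mulfV ?gt_eqF // mul1r.
by rewrite mulrCA H.
Qed.

Section NonnegWeight.
Variables (k : nat) (A : pred V) (M : V -> K).
Hypothesis M_ge0 : forall x, x \in A -> 0 <= M x.

Lemma little_o0 : little_o k A M (fun _ _ => 0).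
Proof.
move=> d d0; exists 1 => // e e0 _ _ x xA.
by rewrite normr0 !mulr_ge0 ?exprn_ge0 ?M_ge0 ?ltW.
Qed.



Lemma little_o_sum_nat a b (F : nat -> K -> V -> K) :
  (forall i, (a <= i < b)%N -> little_o k A M (F i)) ->
  little_o k A M (fun e x => \sum_(a <= i < b) F i e x).
Proof.
move=> oF; have : forall i, i \in index_iota a b -> little_o k A M (F i).
  by move=> i; rewrite mem_index_iota; exact: oF.
elim: (index_iota a b) => [_|i s IH oFs].
  by apply: little_o_ext little_o0 => e _ _ x _; rewrite big_nil.
have oFi : little_o k A M (F i) by apply: oFs; rewrite inE eqxx.
have oS : little_o k A M (fun e x => \sum_(j <- s) F j e x).
  by apply: IH => j js; apply: oFs; rewrite inE js orbT.
by apply: little_o_ext (little_oD oFi oS) => e _ _ x _; rewrite big_cons.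
Qed.

Lemma little_o_mulr r (s : K -> K) C : 0 <= C ->
  (forall e, 0 < e -> e < 1 -> `|s e| <= C) ->
  little_o k A M r -> little_o k A M (fun e x => s e * r e x).
Proof.
move=> C0 s_bd o d d0.
have d'0 : 0 < d / (C + 1) by rewrite divr_gt0 ?add1_gt0.
have [eta eta0 H] := o _ d'0; exists eta => // e e0 e1 lt_eta x xA.
rewrite normrM; apply: le_trans (ler_pM _ _ (s_bd e e0 e1) (H e e0 e1 lt_eta x xA)) _ => //.
by apply: ler_mul_shrink => //; [exact: ltW | rewrite mulr_ge0 ?M_ge0 ?exprn_ge0 ?ltW].
Qed.

Lemma little_o_scalar_mul (s : K -> K) (b : K -> V -> K) C : 0 <= C ->
  (forall e, 0 < e -> e < 1 -> forall x, x \in A -> `|b e x| <= C * M x) ->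
  little_o_scalar k s -> little_o k A M (fun e x => s e * b e x).
Proof.
move=> C0 b_bd o d d0.
have d'0 : 0 < d / (C + 1) by rewrite divr_gt0 ?add1_gt0.
have [eta eta0 H] := o _ d'0; exists eta => // e e0 e1 lt_eta x xA.
have := H e e0 e1 lt_eta x isT; rewrite mulr1 => s_small.
rewrite normrM; apply: le_trans (ler_pM _ _ s_small (b_bd e e0 e1 x xA)) _ => //.
rewrite (_ : _ * (C * M x) = C * (d / (C + 1) * (e ^+ k * M x))); last by ring.
by apply: ler_mul_shrink => //; [exact: ltW | rewrite mulr_ge0 ?M_ge0 ?exprn_ge0 ?ltW].
Qed.

Lemma bigO_succ_little_o r C : 0 <= C ->
  (forall e, 0 < e -> e < 1 -> forall x, x \in A -> `|r e x| <= C * (e ^+ k.+1 * M x)) ->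
  little_o k A M r.
Proof.
move=> C0 r_bd d d0.
have eta0 : 0 < d / (C + 1) by rewrite divr_gt0 ?add1_gt0.
exists (d / (C + 1)) => // e e0 e1 lt_eta x xA.
apply: le_trans (r_bd e e0 e1 x xA) _.
have X0 : 0 <= e ^+ k * M x by rewrite mulr_ge0 ?M_ge0 ?exprn_ge0 ?ltW.
have -> : C * (e ^+ k.+1 * M x) = C * e * (e ^+ k * M x) by rewrite exprS; ring.
rewrite ler_wpM2r //; apply: le_trans (ler_wpM2l C0 (ltW lt_eta)) _.
by have := ler_mul_shrink C0 (ltW d0) ler01; rewrite !mulr1.
Qed.

Lemma sum_powers_bound (b : nat -> V -> K) C : 0 <= C ->
  (forall j x, (j <= k)%N -> x \in A -> `|b j x| <= C * M x) ->
  forall e, 0 < e -> e < 1 -> forall x, x \in A ->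
  `|\sum_(0 <= j < k.+1) b j x * e ^+ j| <= (C *+ k.+1) * M x.
Proof.
move=> C0 b_bd e e0 e1 x xA; apply: le_trans (ler_norm_sum _ _ _) _.
apply: le_trans (ler_sum_nat (G := fun _ => C * M x) _) _.
  move=> j /andP[_ ltjk].
  have ej1 : `|e ^+ j| <= 1 by rewrite normrX ger0_norm ?exprn_ile1 // ltW.
  by rewrite normrM -[leRHS]mulr1 ler_pM // b_bd.
by rewrite sumr_const_nat subn0 mulrnAl.
Qed.

Lemma tail_product_bound (a : nat -> K) (b : nat -> V -> K) C : 0 <= C ->
  (forall j x, (j <= k)%N -> x \in A -> `|b j x| <= C * M x) ->
  exists2 C', 0 <= C' & forall e, 0 < e -> e < 1 -> forall x, x \in A ->
  `|\sum_(0 <= i < k.+1) \sum_(0 <= j < k.+1 | (k < i + j)%N)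
       (a i * e ^+ i) * (b j x * e ^+ j)| <= C' * (e ^+ k.+1 * M x).
Proof.
move=> C0 b_bd.
exists (\sum_(0 <= i < k.+1) \sum_(0 <= j < k.+1 | (k < i + j)%N) `|a i| * C).
  by apply: sumr_ge0 => i _; apply: sumr_ge0 => j _; rewrite mulr_ge0.
move=> e e0 e1 x xA; rewrite mulr_suml.
apply: le_trans (ler_norm_sum _ _ _) _; apply: ler_sum_nat => i /andP[_ ltik].
rewrite mulr_suml; apply: le_trans (ler_norm_sum _ _ _) _.
rewrite big_mkcond [leRHS]big_mkcond; apply: ler_sum_nat => j /andP[_ ltjk].
case: ifP => // lt_k_ij.
have [ei0 ej0] : 0 <= e ^+ i /\ 0 <= e ^+ j by rewrite !exprn_ge0 ?ltW.
rewrite !normrM (ger0_norm ei0) (ger0_norm ej0).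
have eij : e ^+ i * e ^+ j <= e ^+ k.+1 by rewrite -exprD ler_wiXn2l ?ltW.
rewrite (_ : _ * (`|b j x| * _) = `|a i| * (`|b j x| * (e ^+ i * e ^+ j))); last by ring.
rewrite (_ : _ * (_ * M x) = `|a i| * ((C * M x) * e ^+ k.+1)); last by ring.
by rewrite ler_wpM2l // ler_pM ?mulr_ge0 ?b_bd //; lia.
Qed.

End NonnegWeight.

Lemma poly_bounded (a : nat -> K) k : exists2 C, 0 <= C &
  forall e, 0 < e -> e < 1 -> `|\sum_(0 <= i < k.+1) a i * e ^+ i| <= C.
Proof.
exists (\sum_(0 <= i < k.+1) `|a i|); first by apply: sumr_ge0.
move=> e e0 e1; apply: le_trans (ler_norm_sum _ _ _) _.
apply: ler_sum_nat => i _; rewrite normrM -[leRHS]mulr1 ler_wpM2l //.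
by rewrite normrX ger0_norm ?exprn_ile1 // ltW.
Qed.

End LittleO.

(** * Expansion of the eigenfunctionals *)

Section Expansion.
Variables (K : numFieldType) (V : lmodType K) (n : nat)
  (B : nat -> pred V) (N : nat -> V -> K)
  (L : nat -> V -> V) (Leps : K -> V -> V)
  (lam : K) (h : V) (nu : V -> K) (D0 : pred V) (Rlam : V -> V)
  (lameps : K -> K) (nueps : K -> V -> K).
Hypotheses
  (B0T : forall x, x \in B 0%N)
  (B_subspace : forall k, (k <= n.+1)%N -> subspace (B k))
  (B_chain : forall k, (k <= n)%N -> forall x, x \in B k.+1 -> x \in B k)
  (L_linear : forall j, (j <= n)%N -> linear_on (B j) (L j))
  (h_B : h \in B n.+1)
  (nu_linear : linear_fun (B 0%N) nu)
  (nuL0 : forall f, nu (L 0%N f) = lam * nu f)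
  (L0h : L 0%N h = lam *: h)
  (nuh : nu h = 1)
  (D0_subspace : subspace D0)
  (B1_D0 : forall x, x \in B 1%N -> x \in D0)
  (Rlam_solves : forall f, f \in D0 -> Rlam f \in B 0%N /\
     L 0%N (Rlam f) - lam * nu (Rlam f) *: h - lam *: Rlam f = f)
  (Rlam_unique : forall f g, f \in D0 -> g \in B 0%N ->
     L 0%N g - lam * nu g *: h - lam *: g = f -> g = Rlam f)
  (Rlam_B : forall i, (1 <= i <= n.+1)%N -> forall x, x \in B i -> Rlam x \in B i)
  (nueps_eigen : forall eps, 0 < eps -> eps < 1 ->
     [/\ linear_fun (B 0%N) (nueps eps),
         forall f, nueps eps (Leps eps f) = lameps eps * nueps eps f
       & nueps eps h != 0])
  (B_banach : forall k, (k <= n.+1)%N -> banach (B k) (N k))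
  (nu_bounded : bounded_fun (B 0%N) (N 0%N) nu)
  (L_bounded : forall j i, (j <= n)%N -> (j <= i)%N -> (i <= n.+1)%N ->
     bounded_op (B i) (N i) (B (i - j)%N) (N (i - j)%N) (L j))
  (kappa_eps_bounded : exists C, forall eps, 0 < eps -> eps < 1 ->
     forall f, f \in B 0%N -> `|nueps eps f / nueps eps h| <= C * N 0%N f)
  (Rlam_bounded10 : bounded_op (B 1%N) (N 1%N) (B 0%N) (N 0%N) Rlam)
  (Rlam_bounded : forall j, (1 <= j <= n.+1)%N ->
     bounded_op (B j) (N j) (B j) (N j) Rlam)
  (Leps_expansion : forall j, (j <= n)%N ->
     op_norm_to0 (B j.+1) (N j.+1) (N 0%N)
       (fun eps f => eps ^- j *: (Leps eps f - L 0%N f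
                                 - \sum_(1 <= i < j.+1) eps ^+ i *: L i f))).

Local Notation kappa e f := (nueps e f / nueps e h).
Local Notation kc := (kappa_coef L nu h Rlam).
Local Notation nk := (normk N).

Lemma B_mono i j x : x \in B i -> (j <= i)%N -> (i <= n.+1)%N -> x \in B j.
Proof.
elim: i j => [|i IH] j xB le_ji le_in; first by case: j le_ji.
have [->//|ne_ji] := eqVneq j i.+1.
by apply: (IH j); [apply: B_chain => //; nat_lia | nat_lia | nat_lia].
Qed.

Lemma N_ge0 k x : (k <= n.+1)%N -> x \in B k -> 0 <= N k x.
Proof. by move=> le_kn xB; have [_ [N0 _ _ _] _] := B_banach le_kn; apply: N0. Qed.

Lemma normk_max k x : (0 < k <= n.+1)%N -> x \in B k ->
  let m := \big[Num.max/0]_(1 <= i < k.+1) N i x in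
  [/\ nk k x = m, 0 <= m, forall i, (0 < i <= k)%N -> N i x <= m
    & forall c, 0 <= c -> (forall i, (0 < i <= k)%N -> N i x <= c) -> m <= c].
Proof.
case: k => [//|k] k_range xB /=.
have [|m0 Nle mle] := @bigmax_nonneg K (N ^~ x) (index_iota 1 k.+2).
  by move=> i; rewrite mem_index_iota => i_range; apply: N_ge0 (B_mono xB _ _); nat_lia.
split=> // [i i_range|c c0 Nc]; first by apply: Nle; rewrite mem_index_iota.
by apply: mle => // i; rewrite mem_index_iota; apply: Nc.
Qed.

Lemma normk_ge0 k x : (k <= n.+1)%N -> x \in B k -> 0 <= nk k x.
Proof.
case: k => [|k] le_kn xB; first exact: N_ge0.
by have [-> ? _ _] := @normk_max k.+1 x ltac:(nat_lia) xB.
Qed.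

Lemma normkS_ge0 k : (k <= n)%N -> forall x, x \in B k.+1 -> 0 <= nk k.+1 x.
Proof. by move=> le_kn x xB; rewrite normk_ge0. Qed.

Lemma N_le_normk k x i : (k <= n.+1)%N -> x \in B k -> (0 < i <= k)%N ->
  N i x <= nk k x.
Proof.
move=> le_kn xB i_range.
by have [-> _ Nle _] := @normk_max k x ltac:(nat_lia) xB; apply: Nle.
Qed.

Lemma normk_le k x c : (k <= n.+1)%N -> x \in B k -> 0 <= c ->
  (k = 0%N -> N 0%N x <= c) -> (forall i, (0 < i <= k)%N -> N i x <= c) ->
  nk k x <= c.
Proof.
case: k => [|k] le_kn xB c0 N0c Nc; first exact: N0c.
by have [-> _ _ mle] := @normk_max k.+1 x ltac:(nat_lia) xB; apply: mle.
Qed.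

Lemma normk_mono j k x : (0 < j <= k)%N -> (k <= n.+1)%N -> x \in B k ->
  nk j x <= nk k x.
Proof.
move=> j_range le_kn xB; have xBj : x \in B j by apply: (B_mono xB); nat_lia.
apply: normk_le; rewrite ?normk_ge0 //; try nat_lia.
by move=> i i_range; apply: N_le_normk => //; nat_lia.
Qed.

Section KappaEps.
Variable e : K.
Hypotheses (e0 : 0 < e) (e1 : e < 1).

Let nueps_linear : linear_fun (B 0%N) (nueps e).
Proof. by case: (nueps_eigen e0 e1). Qed.

Lemma nueps_h_neq0 : nueps e h != 0.
Proof. by case: (nueps_eigen e0 e1). Qed.

Let B0_subspace : subspace (B 0%N). Proof. exact: B_subspace. Qed.

Lemma kappaD x y : kappa e (x + y) = kappa e x + kappa e y.
Proof. by rewrite (linear_funD nueps_linear) ?B0T // mulrDl. Qed.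

Lemma kappaZ a x : kappa e (a *: x) = a * kappa e x.
Proof. by rewrite (linear_funZ _ B0_subspace nueps_linear) ?B0T // mulrA. Qed.

Lemma kappaB x y : kappa e (x - y) = kappa e x - kappa e y.
Proof. by rewrite (linear_funB B0_subspace nueps_linear) ?B0T // mulrBl. Qed.

Lemma kappa_sum (I : Type) (r : seq I) (P : pred I) (F : I -> V) :
  kappa e (\sum_(i <- r | P i) F i) = \sum_(i <- r | P i) kappa e (F i).
Proof.
by rewrite (linear_fun_sum _ B0_subspace nueps_linear) ?mulr_suml // => i _; apply: B0T.
Qed.

Lemma kappa_h : kappa e h = 1.
Proof. by rewrite mulfV // nueps_h_neq0. Qed.

Lemma kappa_Leps u : kappa e (Leps e u) = lameps e * kappa e u.
Proof. by case: (nueps_eigen e0 e1) => _ -> _; rewrite mulrA. Qed.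

End KappaEps.

Let B0_subspace : subspace (B 0%N). Proof. exact: B_subspace. Qed.

Lemma nuD x y : nu (x + y) = nu x + nu y.
Proof. by rewrite (linear_funD nu_linear) ?B0T. Qed.

Lemma nuZ a x : nu (a *: x) = a * nu x.
Proof. by rewrite (linear_funZ _ B0_subspace nu_linear) ?B0T. Qed.

Lemma nuB x y : nu (x - y) = nu x - nu y.
Proof. by rewrite (linear_funB B0_subspace nu_linear) ?B0T. Qed.

Lemma Rlam_linear a x y : x \in D0 -> y \in D0 ->
  Rlam (a *: x + y) = a *: Rlam x + Rlam y.
Proof.
move=> xD yD; have L0_linear : linear_on (B 0%N) (L 0%N) by apply: L_linear.
symmetry; apply: Rlam_unique; rewrite ?subspaceD ?subspaceZ ?B0T //.
rewrite (linear_onD L0_linear) ?B0T //.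
rewrite (linear_onZ _ B0_subspace L0_linear) ?B0T // nuD nuZ.
have -> : lam * (a * nu (Rlam x) + nu (Rlam y)) *: h =
    a *: ((lam * nu (Rlam x)) *: h) + (lam * nu (Rlam y)) *: h.
  by rewrite scalerA -scalerDl; congr (_ *: _); ring.
have -> : lam *: (a *: Rlam x + Rlam y) = a *: (lam *: Rlam x) + lam *: Rlam y.
  by rewrite scalerDr !scalerA mulrC.
by rewrite scale_add_sub3 (Rlam_solves xD).2 (Rlam_solves yD).2.
Qed.

Lemma nu_Rlam f : f \in D0 -> nu f = - (lam * nu (Rlam f)).
Proof. by move=> fD; rewrite -{1}(Rlam_solves fD).2 !nuB !nuZ nuL0 nuh; ring. Qed.

Lemma kappa_sub_nu e f : 0 < e -> e < 1 -> f \in D0 ->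
  kappa e f - nu f = (lameps e - lam) * kappa e (Rlam f)
                     - kappa e (Leps e (Rlam f) - L 0%N (Rlam f)).
Proof.
move=> e0 e1 fD; rewrite (nu_Rlam fD) -{1}(Rlam_solves fD).2.
by rewrite !(kappaB e0 e1) !(kappaZ e0 e1) (kappa_h e0 e1) (kappa_Leps e0 e1); ring.
Qed.

Lemma lameps_sub_lam e : 0 < e -> e < 1 ->
  lameps e - lam = kappa e (Leps e h - L 0%N h).
Proof.
move=> e0 e1; rewrite (kappaB e0 e1) (kappa_Leps e0 e1) L0h (kappaZ e0 e1).
by rewrite (kappa_h e0 e1); ring.
Qed.

Local Notation Leps_rem e k u := (e ^- k *: (Leps e u - L 0%N u
                                 - \sum_(1 <= i < k.+1) e ^+ i *: L i u)).

Lemma kappa_Leps_sub_L0 e k u : 0 < e -> e < 1 ->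
  kappa e (Leps e u - L 0%N u) =
  \sum_(1 <= i < k.+1) e ^+ i * kappa e (L i u) + e ^+ k * kappa e (Leps_rem e k u).
Proof.
move=> e0 e1; have ek0 : e ^+ k != 0 by rewrite expf_neq0 // gt_eqF.
rewrite -(kappaZ e0 e1) scalerA mulfV // scale1r.
under eq_bigr do rewrite -(kappaZ e0 e1).
by rewrite -(kappa_sum e0 e1) -(kappaD e0 e1) [in RHS]addrC subrK.
Qed.

Lemma kappa_bound : exists2 C, 0 <= C &
  forall e, 0 < e -> e < 1 -> forall f, `|kappa e f| <= C * N 0%N f.
Proof.
have [C HC] := kappa_eps_bounded; exists `|C| => // e e0 e1 f.
by apply: ler_normC_mul; rewrite ?N_ge0 ?HC ?B0T.
Qed.

Lemma nu_bound : exists2 C, 0 <= C & forall f, `|nu f| <= C * N 0%N f.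
Proof.
have [C HC] := nu_bounded; exists `|C| => // f.
by apply: ler_normC_mul; rewrite ?N_ge0 ?HC ?B0T.
Qed.

Lemma bounded_op_bound i j T : (i <= n.+1)%N -> (j <= n.+1)%N ->
  bounded_op (B i) (N i) (B j) (N j) T -> exists2 C, 0 <= C &
  forall x, x \in B i -> N j (T x) <= C * N i x.
Proof.
move=> le_in le_jn [TB [C HC]]; exists `|C| => // x xB.
by apply: ler_normC_mul; rewrite ?N_ge0 ?TB ?HC.
Qed.

Lemma L_B_range m s x : (s <= n)%N -> (s <= m)%N -> (m <= n.+1)%N -> x \in B m ->
  L s x \in B (m - s)%N.
Proof. by move=> le_sn le_sm le_mn; case: (L_bounded le_sn le_sm le_mn) => LB _; apply: LB. Qed.

Lemma N_Rlam_bound m : (0 < m <= n.+1)%N -> exists2 C, 0 <= C &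
  forall p, (p <= m)%N -> forall x, x \in B m -> N p (Rlam x) <= C * nk m x.
Proof.
move=> m_range.
apply: (@finite_uniform_bound _ _ (fun x => x \in B m) (fun p x => N p (Rlam x)) _ m.+1).
  by move=> x xB; rewrite normk_ge0 //; nat_lia.
case=> [|p] le_pm.
  have [C C0 HC] := bounded_op_bound (isT : (1 <= n.+1)%N) (leq0n _) Rlam_bounded10.
  exists C => // x xB; apply: le_trans (HC x (B_mono xB _ _)) _; try nat_lia.
  by rewrite ler_wpM2l // N_le_normk //; nat_lia.
have p_range : (1 <= p.+1 <= n.+1)%N by nat_lia.
have le_pn : (p.+1 <= n.+1)%N by nat_lia.
have [C C0 HC] := bounded_op_bound le_pn le_pn (Rlam_bounded p_range).
exists C => // x xB; apply: le_trans (HC x (B_mono xB _ _)) _; try nat_lia.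
by rewrite ler_wpM2l // N_le_normk //; nat_lia.
Qed.

Lemma normk_Rlam m : (0 < m <= n.+1)%N -> exists2 C, 0 <= C &
  forall x, x \in B m -> nk m (Rlam x) <= C * nk m x.
Proof.
move=> m_range; have [C C0 HC] := N_Rlam_bound m_range; exists C => // x xB.
apply: normk_le; rewrite ?Rlam_B ?mulr_ge0 ?normk_ge0 //; try nat_lia.
by move=> p p_range; apply: HC => //; nat_lia.
Qed.

Lemma N_L_bound m s : (0 < s <= n)%N -> (s <= m <= n.+1)%N -> exists2 C, 0 <= C &
  forall p, (p <= m - s)%N -> forall x, x \in B m -> N p (L s x) <= C * nk m x.
Proof.
move=> s_range m_range.
apply: (@finite_uniform_bound _ _ (fun x => x \in B m) (fun p x => N p (L s x)) _
  (m - s).+1) => [x xB|p le_p]; first by rewrite normk_ge0 //; nat_lia.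
have [le_sn le_sps le_psn] : [/\ s <= n, s <= p + s & p + s <= n.+1]%N by split; nat_lia.
have [C C0 HC] := bounded_op_bound le_psn (leq_trans (leq_subr _ _) le_psn)
  (L_bounded le_sn le_sps le_psn).
exists C => // x xB; have xBps : x \in B (p + s) by apply: (B_mono xB); nat_lia.
move: (HC x xBps); rewrite addnK => /le_trans; apply.
by rewrite ler_wpM2l // N_le_normk //; nat_lia.
Qed.

Lemma normk_L m s : (0 < s <= n)%N -> (s <= m <= n.+1)%N -> exists2 C, 0 <= C &
  forall x, x \in B m -> nk (m - s) (L s x) <= C * nk m x.
Proof.
move=> s_range m_range; have [C C0 HC] := N_L_bound s_range m_range.
exists C => // x xB; apply: normk_le; rewrite ?L_B_range ?mulr_ge0 ?normk_ge0 //;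
  try nat_lia.
- by move=> _; apply: HC.
- by move=> p p_range; apply: HC => //; nat_lia.
Qed.

Local Notation Rstep a s x := (a *: Rlam x - L s (Rlam x)).

Lemma Rstep_B m s a x : (0 < s <= n)%N -> (s <= m <= n.+1)%N -> x \in B m ->
  Rstep a s x \in B (m - s)%N.
Proof.
move=> s_range m_range xB; have RxB : Rlam x \in B m by rewrite Rlam_B //; nat_lia.
have sB : subspace (B (m - s)) by apply: B_subspace; nat_lia.
apply: subspaceB => //; first by apply: subspaceZ => //; apply: (B_mono RxB); nat_lia.
by apply: L_B_range => //; nat_lia.
Qed.

Lemma normk_Rstep m s a : (0 < s <= n)%N -> (s <= m <= n.+1)%N -> exists2 C, 0 <= C &
  forall x, x \in B m -> nk (m - s) (Rstep a s x) <= C * nk m x.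
Proof.
move=> s_range m_range; have m_range' : (0 < m <= n.+1)%N by nat_lia.
have [C1 C10 HC1] := N_Rlam_bound m_range'; have [C2 C20 HC2] := normk_Rlam m_range'.
have [C3 C30 HC3] := N_L_bound s_range m_range.
have C0 : 0 <= `|a| * C1 + C3 * C2 by rewrite addr_ge0 ?mulr_ge0.
exists (`|a| * C1 + C3 * C2) => //.
move=> x xB; have RxB : Rlam x \in B m by rewrite Rlam_B.
have N_Rstep p : (p <= m - s)%N ->
    N p (Rstep a s x) <= (`|a| * C1 + C3 * C2) * nk m x.
  move=> le_p; have le_pn : (p <= n.+1)%N by nat_lia.
  have RxBp : Rlam x \in B p by apply: (B_mono RxB); nat_lia.
  have LRxBp : L s (Rlam x) \in B p.
    by apply: (@B_mono (m - s)); rewrite ?L_B_range //; nat_lia.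
  have [_ Nnorm _] := B_banach le_pn.
  apply: le_trans (norm_onZB _ (B_subspace le_pn) Nnorm RxBp LRxBp) _.
  rewrite mulrDl -!mulrA; apply: lerD; first by rewrite ler_wpM2l // HC1 //; nat_lia.
  by apply: le_trans (HC3 p le_p _ RxB) _; rewrite ler_wpM2l ?HC2.
apply: normk_le; rewrite ?Rstep_B ?mulr_ge0 ?normk_ge0 //; try nat_lia.
  by move=> _; apply: N_Rstep.
by move=> p p_range; apply: N_Rstep; nat_lia.
Qed.

Lemma kapT_stable m i : (i <= m)%N -> kapT L nu h Rlam m i = kc i.
Proof.
elim: m i => [|m IH] i le_im; first by case: i le_im.
have [->//|neq_im] := eqVneq i m.+1.
have le_im' : (i <= m)%N by nat_lia.
by rewrite [kapT _ _ _ _ m.+1 i]/= le_im' IH.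
Qed.

Lemma lamT_stable m j : (j <= m.+1)%N ->
  lamT L h (kapT L nu h Rlam m) j = lamT L h kc j.
Proof.
by move=> le_jm; apply: eq_big_nat => i i_range; rewrite kapT_stable //; nat_lia.
Qed.

Lemma kappa_coef_rec t f : (0 < t)%N ->
  kc t f = \sum_(1 <= s < t.+1) kc (t - s)%N (Rstep (lamT L h kc s) s f).
Proof.
case: t => [//|m] _; rewrite /kappa_coef [kapT _ _ _ _ m.+1]/=; cbv beta; rewrite ltnn.
by apply: eq_big_nat => s s_range; rewrite kapT_stable ?lamT_stable //; nat_lia.
Qed.

Lemma kappa_coef_linear k : (k <= n)%N -> linear_fun (B k) (kc k).
Proof.
elim/ltn_ind: k => k IH le_kn; case: k IH le_kn => [|k] IH le_kn; first exact: nu_linear.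
move=> a x y xB yB; rewrite !kappa_coef_rec // mulr_sumr -big_split /=.
apply: eq_big_nat => s s_range.
have [xD yD] : x \in D0 /\ y \in D0.
  by split; apply: B1_D0; [apply: (B_mono xB) | apply: (B_mono yB)]; nat_lia.
have Rstep_linear c : Rstep c s (a *: x + y) = a *: Rstep c s x + Rstep c s y.
  have sBs : subspace (B s) by apply: B_subspace; nat_lia.
  have [RxB RyB] : Rlam x \in B s /\ Rlam y \in B s.
    by split; apply: (@B_mono k.+1); rewrite ?Rlam_B //; nat_lia.
  have Ls_linear : linear_on (B s) (L s) by apply: L_linear; nat_lia.
  rewrite Rlam_linear // (linear_onD Ls_linear) ?subspaceZ //.
  rewrite (linear_onZ _ sBs Ls_linear) // scalerDr !scalerA mulrC.
  by rewrite -scale_add_sub2 -scalerA.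
have sB : subspace (B (k.+1 - s)) by apply: B_subspace; nat_lia.
have kc_linear := IH (k.+1 - s)%N ltac:(nat_lia) ltac:(nat_lia).
rewrite Rstep_linear (linear_funD kc_linear) ?subspaceZ ?Rstep_B //; try nat_lia.
by rewrite (linear_funZ _ sB kc_linear) ?Rstep_B //; nat_lia.
Qed.

Lemma kappa_coef_bound k : (k <= n)%N -> exists2 C, 0 <= C &
  forall x, x \in B k -> `|kc k x| <= C * nk k x.
Proof.
elim/ltn_ind: k => k IH le_kn; case: k IH le_kn => [|k] IH le_kn.
  by have [C C0 HC] := nu_bound; exists C => // x _; apply: HC.
have [C C0 HC] : exists2 C, 0 <= C & forall p, (p < k.+1)%N -> forall x,
    x \in B k.+1 -> `|kc (k.+1 - p.+1) (Rstep (lamT L h kc p.+1) p.+1 x)| <= C * nk k.+1 x.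
  apply: finite_uniform_bound => [x xB|p lt_pk]; first by rewrite normk_ge0 //; nat_lia.
  have [C1 C10 HC1] := IH (k.+1 - p.+1)%N ltac:(nat_lia) ltac:(nat_lia).
  have [C2 C20 HC2] := @normk_Rstep k.+1 p.+1 (lamT L h kc p.+1)
    ltac:(nat_lia) ltac:(nat_lia).
  exists (C1 * C2) => [|x xB]; first by rewrite mulr_ge0.
  apply: le_trans (HC1 _ (Rstep_B _ _ _ xB)) _; try nat_lia.
  by rewrite -mulrA ler_wpM2l // HC2.
exists (C *+ k.+1) => [|x xB]; first by rewrite mulrn_wge0.
rewrite kappa_coef_rec // big_add1 /=.
apply: le_trans (norm_sum_nat_le (c := C * nk k.+1 x) _) _; last by rewrite mulrnAl.
by move=> p /andP[_ lt_pk]; apply: HC.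
Qed.

Local Notation rem m e u :=
  (kappa e u - nu u - \sum_(1 <= i < m.+1) kc i u * e ^+ i).

Lemma remE m e u : rem m e u = kappa e u - \sum_(0 <= i < m.+1) kc i u * e ^+ i.
Proof. by rewrite [in RHS]big_ltn // expr0 mulr1 opprD addrA. Qed.

Lemma sum_kappa_remE k e (g : nat -> V) :
  \sum_(1 <= s < k.+1) e ^+ s * kappa e (g s) =
  \sum_(1 <= s < k.+1) e ^+ s * rem (k - s)%N e (g s) +
  \sum_(1 <= t < k.+1) (\sum_(1 <= s < t.+1) kc (t - s)%N (g s)) * e ^+ t.
Proof.
rewrite (eq_big_nat _ _ (F2 := fun s => e ^+ s * rem (k - s)%N e (g s) +
    \sum_(0 <= m < (k - s)%N.+1) e ^+ s * (kc m (g s) * e ^+ m))); last first.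
  by move=> s _; rewrite remE -mulr_sumr -mulrDr subrK.
rewrite big_split /= sum_antidiagonal1; congr (_ + _).
apply: eq_big_nat => t /andP[t0 _]; rewrite mulr_suml.
apply: eq_big_nat => s /andP[s0 le_st].
by rewrite mulrCA -exprD subnKC //; nat_lia.
Qed.

Lemma kappa_coef_bounded k : (k <= n)%N -> bounded_fun (B k) (nk k) (kc k).
Proof. by move=> le_kn; have [C _ HC] := kappa_coef_bound le_kn; exists C. Qed.

Lemma Leps_rem_little_o k : (k <= n)%N ->
  little_o k (B k.+1) (nk k.+1) (fun e u => e ^+ k * kappa e (Leps_rem e k u)).
Proof.
move=> le_kn d d0; have [C C0 HC] := kappa_bound.
have d'0 : 0 < d / (C + 1) by rewrite divr_gt0 ?add1_gt0.
have [eta eta0 Hsmall] := Leps_expansion le_kn d'0.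
exists eta => // e e0 e1 lt_eta u uB; have ek0 : 0 <= e ^+ k by rewrite exprn_ge0 ?ltW.
rewrite normrM (ger0_norm ek0) mulrCA ler_wpM2l //.
have Nu_le : N k.+1 u <= nk k.+1 u by rewrite N_le_normk //; nat_lia.
apply: le_trans (HC e e0 e1 _) _.
apply: le_trans (ler_wpM2l C0 (Hsmall e e0 e1 lt_eta u uB)) _.
apply: le_trans (ler_wpM2l C0 (ler_wpM2l (ltW d'0) Nu_le)) _.
by apply: ler_mul_shrink => //; [exact: ltW | rewrite normk_ge0 //; nat_lia].
Qed.

Lemma kappa_Leps_defectE k e u : 0 < e -> e < 1 ->
  kappa e (Leps e u - L 0%N u) - \sum_(1 <= s < k.+1) lamT L u kc s * e ^+ s =
  \sum_(1 <= s < k.+1) e ^+ s * rem (k - s)%N e (L s u) + e ^+ k * kappa e (Leps_rem e k u).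
Proof.
by move=> e0 e1; rewrite (kappa_Leps_sub_L0 k u e0 e1) sum_kappa_remE; ring.
Qed.

Lemma kappa_Leps_defect_little_o k : (k <= n)%N ->
  (forall m, (m < k)%N -> little_o m (B m.+1) (nk m.+1) (fun e u => rem m e u)) ->
  little_o k (B k.+1) (nk k.+1) (fun e u =>
    kappa e (Leps e u - L 0%N u) - \sum_(1 <= s < k.+1) lamT L u kc s * e ^+ s).
Proof.
move=> le_kn IH; have M0 := @normkS_ge0 k le_kn.
apply: little_o_ext (little_oD _ (Leps_rem_little_o le_kn)).
  by move=> e e0 e1 u _; rewrite kappa_Leps_defectE.
apply: (little_o_sum_nat M0 (F := fun s e u => e ^+ s * rem (k - s)%N e (L s u))).
move=> s /andP[s0 lt_sk].
have ks : (k.+1 - s)%N = (k - s).+1 by nat_lia.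
have [C C0 HC] := @normk_L k.+1 s ltac:(nat_lia) ltac:(nat_lia); rewrite ks in HC.
have LB x : x \in B k.+1 -> L s x \in B (k - s).+1.
  by move=> xB; rewrite -ks L_B_range //; nat_lia.
have := little_o_shift s (little_o_comp M0 C0 LB HC (IH (k - s)%N ltac:(nat_lia))).
by rewrite subnKC //; nat_lia.
Qed.

Lemma remE_rec k e f : (k <= n)%N -> 0 < e -> e < 1 -> f \in B k.+1 ->
  rem k e f =
  \sum_(1 <= s < k.+1) e ^+ s * rem (k - s)%N e (Rstep (lamT L h kc s) s f)
  + (kappa e (Leps e h - L 0%N h) - \sum_(1 <= s < k.+1) lamT L h kc s * e ^+ s)
      * kappa e (Rlam f)
  - e ^+ k * kappa e (Leps_rem e k (Rlam f)).
Proof.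
move=> le_kn e0 e1 fB; have fD : f \in D0 by apply: B1_D0; apply: (B_mono fB); nat_lia.
have := kappa_sub_nu e0 e1 fD.
rewrite (lameps_sub_lam e0 e1) (kappa_Leps_sub_L0 k (Rlam f) e0 e1) => ->.
have E3 : \sum_(1 <= s < k.+1) e ^+ s * kappa e (Rstep (lamT L h kc s) s f) =
    (\sum_(1 <= s < k.+1) lamT L h kc s * e ^+ s) * kappa e (Rlam f)
    - \sum_(1 <= s < k.+1) e ^+ s * kappa e (L s (Rlam f)).
  under eq_bigr do rewrite (kappaB e0 e1) (kappaZ e0 e1) mulrBr.
  by rewrite sumrB mulr_suml; congr (_ - _); apply: eq_bigr => s _; rewrite mulrCA mulrA.
have inner : \sum_(1 <= t < k.+1)
    (\sum_(1 <= s < t.+1) kc (t - s)%N (Rstep (lamT L h kc s) s f)) * e ^+ t =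
    \sum_(1 <= t < k.+1) kc t f * e ^+ t.
  by apply: eq_big_nat => t /andP[t0 _]; rewrite -kappa_coef_rec.
have := sum_kappa_remE k e (fun s => Rstep (lamT L h kc s) s f).
rewrite E3 inner => E2.
have -> : \sum_(1 <= s < k.+1) e ^+ s * rem (k - s)%N e (Rstep (lamT L h kc s) s f) =
    (\sum_(1 <= s < k.+1) lamT L h kc s * e ^+ s) * kappa e (Rlam f)
    - \sum_(1 <= s < k.+1) e ^+ s * kappa e (L s (Rlam f))
    - \sum_(1 <= t < k.+1) kc t f * e ^+ t by rewrite E2 addrK.
ring.
Qed.

Lemma kappa_rem_little_o k : (k <= n)%N ->
  little_o k (B k.+1) (nk k.+1) (fun e u => rem k e u).
Proof.
elim/ltn_ind: k => k IH le_kn.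
have {}IH m : (m < k)%N -> little_o m (B m.+1) (nk m.+1) (fun e u => rem m e u).
  by move=> lt_mk; apply: IH => //; nat_lia.
have M0 := @normkS_ge0 k le_kn.
have k_range : (0 < k.+1 <= n.+1)%N by nat_lia.
apply: little_o_ext; first by move=> e e0 e1 f fB; rewrite (remE_rec le_kn e0 e1 fB).
apply: little_oB; first apply: little_oD.
- apply: (little_o_sum_nat M0
    (F := fun s e u => e ^+ s * rem (k - s)%N e (Rstep (lamT L h kc s) s u))).
  move=> s /andP[s0 lt_sk]; have ks : (k.+1 - s)%N = (k - s).+1 by nat_lia.
  have [C C0 HC] := @normk_Rstep k.+1 s (lamT L h kc s) ltac:(nat_lia) ltac:(nat_lia).
  rewrite ks in HC.
  have RB x : x \in B k.+1 -> Rstep (lamT L h kc s) s x \in B (k - s).+1.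
    by move=> xB; rewrite -ks Rstep_B //; nat_lia.
  have := little_o_shift s (little_o_comp M0 C0 RB HC (IH (k - s)%N ltac:(nat_lia))).
  by rewrite subnKC //; nat_lia.
- have hB : h \in B k.+1 by apply: (B_mono h_B); nat_lia.
  have defect := little_o_at hB (M0 h hB) (kappa_Leps_defect_little_o le_kn IH).
  have [C1 C10 HC1] := kappa_bound; have [C2 C20 HC2] := N_Rlam_bound k_range.
  apply: (little_o_scalar_mul M0 (C := C1 * C2)) defect; first by rewrite mulr_ge0.
  move=> e e0 e1 x xB; apply: le_trans (HC1 e e0 e1 _) _.
  by rewrite -mulrA ler_wpM2l // HC2.
- have [C C0 HC] := normk_Rlam k_range.
  exact: little_o_comp M0 C0 (fun x xB => Rlam_B k_range xB) HC (Leps_rem_little_o le_kn).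
Qed.

Lemma kappa_expansion k : (k <= n)%N ->
  fun_norm_to0 (B k.+1) (nk k.+1)
    (fun e f => e ^- k * (kappa e f - nu f - \sum_(1 <= i < k.+1) kc i f * e ^+ i)).
Proof. by move=> le_kn; apply: little_o_fun_norm_to0 (kappa_rem_little_o le_kn). Qed.

Lemma nu_coefE one k f : (k <= n)%N -> nu_coef L nu h Rlam one k f =
  \sum_(0 <= i < k.+1) inv_coef (fun j => kc j one) n i * kc (k - i)%N f.
Proof.
move=> le_kn; rewrite /nu_coef [RHS]big_ltn // inv_coef0 mul1r subn0; congr (_ + _).
apply: eq_big_nat => i i_range; congr (_ * _).
by apply: compositions_inv_coef; nat_lia.
Qed.

Lemma kappa_coef_uniform_bound k m : (k <= n)%N -> (k <= m <= n.+1)%N ->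
  exists2 C, 0 <= C & forall j f, (j <= k)%N -> f \in B m -> `|kc j f| <= C * nk m f.
Proof.
move=> le_kn k_range.
have [C C0 HC] : exists2 C, 0 <= C &
    forall j, (j < k.+1)%N -> forall f, f \in B m -> `|kc j f| <= C * nk m f.
  apply: finite_uniform_bound => [f fB|]; first by rewrite normk_ge0 //; nat_lia.
  case=> [_|j lt_jk].
    (* [nu] is only controlled by [N 0], which [nk m] omits when [m > 0];
       there we use [nu f = - lam nu (Rlam f)] instead. *)
    have [C C0 HC] := nu_bound; case: m k_range => [|m] m_range.
      by exists C => // f _; apply: HC.
    have m_range' : (0 < m.+1 <= n.+1)%N by nat_lia.
    have [C1 C10 HC1] := N_Rlam_bound m_range'.
    exists (`|lam| * C * C1) => [|f fB]; first by rewrite !mulr_ge0.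
    have fD : f \in D0 by apply: B1_D0; apply: (B_mono fB); nat_lia.
    rewrite [kc 0%N f](nu_Rlam fD) normrN normrM -!mulrA ler_wpM2l //.
    by apply: le_trans (HC _) _; rewrite ler_wpM2l // HC1.
  have [C C0 HC] := @kappa_coef_bound j.+1 ltac:(nat_lia).
  exists C => // f fB; apply: le_trans (HC f _) _; first by apply: (B_mono fB); nat_lia.
  by rewrite ler_wpM2l // normk_mono //; nat_lia.
by exists C => // j f le_jk fB; apply: HC.
Qed.

Lemma nu_coef_linear one k : (k <= n)%N -> linear_fun (B k) (nu_coef L nu h Rlam one k).
Proof.
move=> le_kn a x y xB yB; rewrite !nu_coefE // mulr_sumr -big_split /=.
apply: eq_big_nat => i /andP[_ lt_ik].
have kc_linear := @kappa_coef_linear (k - i)%N ltac:(nat_lia).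
have sB : subspace (B (k - i)%N) by apply: B_subspace; nat_lia.
have [xB' yB'] : x \in B (k - i)%N /\ y \in B (k - i)%N.
  by split; [apply: (B_mono xB) | apply: (B_mono yB)]; nat_lia.
by rewrite (linear_funD kc_linear) ?(linear_funZ _ sB kc_linear) ?subspaceZ //; ring.
Qed.

Lemma nu_coef_bounded one k : (k <= n)%N ->
  bounded_fun (B k) (nk k) (nu_coef L nu h Rlam one k).
Proof.
move=> le_kn; have [C C0 HC] := @kappa_coef_uniform_bound k k le_kn ltac:(nat_lia).
pose c := inv_coef (fun j => kc j one) n.
exists ((\sum_(0 <= i < k.+1) `|c i|) * C) => f fB; rewrite nu_coefE //.
apply: le_trans (ler_norm_sum _ _ _) _; rewrite -mulrA mulr_suml.
apply: ler_sum_nat => i /andP[_ lt_ik]; rewrite normrM ler_wpM2l // HC //; nat_lia.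
Qed.

Section NuExpansion.
Variable one : V.
Hypotheses (one_B : one \in B n.+1) (nu_one : nu one = 1)
  (nueps_one : forall e, 0 < e -> e < 1 -> nueps e one = 1).
Local Notation c := (inv_coef (fun j => kc j one) n).

Lemma nueps_remE k e f : (k <= n)%N -> 0 < e -> e < 1 ->
  nueps e f - \sum_(0 <= t < k.+1) nu_coef L nu h Rlam one t f * e ^+ t =
  nueps e h * rem k e f
  + (nueps e h - \sum_(0 <= i < k.+1) c i * e ^+ i)
      * \sum_(0 <= j < k.+1) kc j f * e ^+ j
  + \sum_(0 <= i < k.+1) \sum_(0 <= j < k.+1 | (k < i + j)%N)
       (c i * e ^+ i) * (kc j f * e ^+ j).
Proof.
move=> le_kn e0 e1; have prodE := mul_sum_powers c (kc ^~ f) e k.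
have cauchyE : \sum_(0 <= t < k.+1) (\sum_(0 <= i < t.+1) c i * kc (t - i)%N f) * e ^+ t =
    \sum_(0 <= t < k.+1) nu_coef L nu h Rlam one t f * e ^+ t.
  by apply: eq_big_nat => t /andP[_ lt_tk]; rewrite nu_coefE //; nat_lia.
rewrite cauchyE in prodE.
have nuepsE : nueps e f = nueps e h * kappa e f by rewrite mulrC divfK // nueps_h_neq0.
have -> : \sum_(0 <= t < k.+1) nu_coef L nu h Rlam one t f * e ^+ t =
    (\sum_(0 <= i < k.+1) c i * e ^+ i) * (\sum_(0 <= j < k.+1) kc j f * e ^+ j)
    - \sum_(0 <= i < k.+1) \sum_(0 <= j < k.+1 | (k < i + j)%N)
        (c i * e ^+ i) * (kc j f * e ^+ j) by rewrite prodE addrK.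
by rewrite remE {1}nuepsE; ring.
Qed.

Lemma nueps_h_remE k e : (k <= n)%N -> 0 < e -> e < 1 ->
  nueps e h - \sum_(0 <= i < k.+1) c i * e ^+ i =
  - (nueps e h * \sum_(0 <= i < k.+1) \sum_(0 <= j < k.+1 | (k < i + j)%N)
       (kc i one * e ^+ i) * (c j * e ^+ j))
  - nueps e h * (rem k e one * \sum_(0 <= i < k.+1) c i * e ^+ i).
Proof.
move=> le_kn e0 e1; have kc0_one : kc 0%N one = 1 by [].
have nueps_h_kappa : nueps e h * kappa e one = 1.
  by rewrite (nueps_one e0 e1) mul1r mulfV // nueps_h_neq0.
have cauchyE : \sum_(0 <= t < k.+1)
    (\sum_(0 <= i < t.+1) kc i one * c (t - i)%N) * e ^+ t = 1.
  rewrite big_ltn // big_nat1 inv_coef0 kc0_one !mulr1 big1_seq ?addr0 //.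
  move=> t /andP[_]; rewrite mem_index_iota => t_range.
  by rewrite inv_coef_rec ?mul0r //; nat_lia.
have := mul_sum_powers (kc ^~ one) c e k; rewrite cauchyE.
set Ck := \sum_(0 <= i < k.+1) c i * e ^+ i.
set Pk := \sum_(0 <= j < k.+1) kc j one * e ^+ j.
set T := \sum_(0 <= i < k.+1) _; set r := rem k e one => prodE.
have kappaE : kappa e one = Pk + r by rewrite /r remE addrC subrK.
rewrite kappaE in nueps_h_kappa.
transitivity (nueps e h - Ck * (nueps e h * (Pk + r))); first by rewrite nueps_h_kappa mulr1.
transitivity (nueps e h - nueps e h * (Pk * Ck) - nueps e h * (r * Ck)); first by ring.
by rewrite prodE; ring.
Qed.

Variable Ch : K.
Hypothesis nueps_h_bd : forall e, 0 < e -> e < 1 -> `|nueps e h| <= Ch.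

Let Ch_ge0 : 0 <= Ch.
Proof.
have half0 : (0 : K) < 2^-1 by rewrite invr_gt0 ltr0n.
have half1 : (2^-1 : K) < 1 by rewrite invf_lt1 ?ltr0n // ltr1n.
exact: le_trans (normr_ge0 _) (nueps_h_bd half0 half1).
Qed.

Lemma nueps_h_expansion k : (k <= n)%N ->
  little_o_scalar V k (fun e => nueps e h - \sum_(0 <= i < k.+1) c i * e ^+ i).
Proof.
move=> le_kn; have one0 (x : V) : x \in (predT : pred V) -> (0 : K) <= 1 by [].
apply: little_o_ext; first by move=> e e0 e1 x _; rewrite (nueps_h_remE le_kn e0 e1).
apply: little_oB; first apply: little_oN; apply: (little_o_mulr one0 Ch_ge0 (@nueps_h_bd)).
- have [Cc Cc0 HCc] : exists2 C, 0 <= C & forall j, (j < k.+1)%N -> forall x : V,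
      True -> `|c j| <= C * 1.
    apply: finite_uniform_bound => // j _.
    by exists `|c j| => // x _; rewrite mulr1.
  have [C C0 HC] := tail_product_bound (A := (predT : pred V)) (M := fun _ => 1)
    (kc ^~ one) Cc0 (fun j x le_jk _ => HCc j le_jk x I).
  by apply: (bigO_succ_little_o one0 C0) => e e0 e1 x _; apply: (HC e e0 e1 x).
- have [Cp Cp0 HCp] := poly_bounded c k.
  have one_Bk : one \in B k.+1 by apply: (B_mono one_B); nat_lia.
  have Mone : 0 <= nk k.+1 one by rewrite normk_ge0 //; nat_lia.
  have rem_one := little_o_at one_Bk Mone (kappa_rem_little_o le_kn).
  apply: (little_o_scalar_mul one0 Cp0 _ rem_one) => e e0 e1 x _.
  by rewrite mulr1 HCp.
Qed.

Lemma nu_rem_little_o k : (k <= n)%N ->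
  little_o k (B k.+1) (nk k.+1) (fun e f =>
    nueps e f - \sum_(0 <= i < k.+1) nu_coef L nu h Rlam one i f * e ^+ i).
Proof.
move=> le_kn; have M0 := @normkS_ge0 k le_kn.
have [C C0 HC] := @kappa_coef_uniform_bound k k.+1 le_kn ltac:(nat_lia).
apply: little_o_ext; first by move=> e e0 e1 f fB; rewrite (nueps_remE f le_kn e0 e1).
apply: little_oD; first apply: little_oD.
- by apply: (little_o_mulr M0 Ch_ge0 (@nueps_h_bd)); apply: kappa_rem_little_o.
- apply: (little_o_scalar_mul M0 (mulrn_wge0 k.+1 C0) _ (nueps_h_expansion le_kn)).
  by move=> e e0 e1 x xB; apply: (sum_powers_bound C0 HC e0 e1 xB).
- have [C' C'0 HC'] := tail_product_bound c C0 HC.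
  by apply: (bigO_succ_little_o M0 C'0) => e e0 e1 x xB; apply: HC'.
Qed.

Lemma nu_expansion k : (k <= n)%N ->
  fun_norm_to0 (B k.+1) (nk k.+1) (fun e f => e ^- k * (nueps e f
    - \sum_(0 <= i < k.+1) nu_coef L nu h Rlam one i f * e ^+ i)).
Proof. by move=> le_kn; apply: little_o_fun_norm_to0 (nu_rem_little_o le_kn). Qed.


End NuExpansion.

End Expansion.

Theorem mainTheorem4
  (R : realType) (isC : bool) (V : lmodType (Kfield R isC)) (n : nat)
  (B : nat -> pred V) (N : nat -> V -> Kfield R isC)
  (L : nat -> V -> V) (Leps : Kfield R isC -> V -> V)
  (lam : Kfield R isC) (h : V) (nu : V -> Kfield R isC)
  (D0 : pred V) (Rlam : V -> V)
  (lameps : Kfield R isC -> Kfield R isC)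
  (nueps : Kfield R isC -> V -> Kfield R isC) :
  (* the chain B^0 = V > B^1 > ... > B^{n+1} of linear subspaces *)
  (forall x, x \in B 0%N) ->
  (forall k, (k <= n.+1)%N -> subspace (B k)) ->
  (forall k, (k <= n)%N -> forall x, x \in B k.+1 -> x \in B k) ->
  (* (I) *)
  (forall j, (j <= n)%N -> linear_on (B j) (L j)) ->
  (forall j i, (j <= i)%N -> (i <= n)%N -> forall x, x \in B i -> L j x \in B (i - j)%N) ->
  (forall eps, 0 < eps -> eps < 1 -> linear_on (B 0%N) (Leps eps)) ->
  (* (II) *)
  lam != 0 -> h \in B n.+1 -> linear_fun (B 0%N) nu ->
  (forall f, nu (L 0%N f) = lam * nu f) -> L 0%N h = lam *: h -> nu h = 1 ->
  subspace D0 -> (forall x, x \in B 1%N -> x \in D0) ->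
  (forall f, f \in D0 -> Rlam f \in B 0%N /\
     L 0%N (Rlam f) - lam * nu (Rlam f) *: h - lam *: Rlam f = f) ->
  (forall f g, f \in D0 -> g \in B 0%N ->
     L 0%N g - lam * nu g *: h - lam *: g = f -> g = Rlam f) ->
  (forall i, (1 <= i <= n.+1)%N -> forall x, x \in B i -> Rlam x \in B i) ->
  (* (III) *)
  (forall eps, 0 < eps -> eps < 1 ->
     [/\ linear_fun (B 0%N) (nueps eps),
         forall f, nueps eps (Leps eps f) = lameps eps * nueps eps f
       & nueps eps h != 0]) ->
  (* (a) *)
  (forall k, (k <= n.+1)%N -> banach (B k) (N k)) ->
  (* (b) *)
  bounded_fun (B 0%N) (N 0%N) nu ->
  (forall j i, (j <= n)%N -> (j <= i)%N -> (i <= n.+1)%N ->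
     bounded_op (B i) (N i) (B (i - j)%N) (N (i - j)%N) (L j)) ->
  (exists C, forall eps, 0 < eps -> eps < 1 -> forall f, f \in B 0%N ->
     `|nueps eps f / nueps eps h| <= C * N 0%N f) ->
  bounded_op (B 1%N) (N 1%N) (B 0%N) (N 0%N) Rlam ->
  (forall j, (1 <= j <= n.+1)%N -> bounded_op (B j) (N j) (B j) (N j) Rlam) ->
  (* (c) *)
  (forall j, (j <= n)%N ->
     op_norm_to0 (B j.+1) (N j.+1) (N 0%N)
       (fun eps f => eps ^- j *: (Leps eps f - L 0%N f
                                 - \sum_(1 <= i < j.+1) eps ^+ i *: L i f))) ->
  (* conclusions *)
  [/\ (forall k, (k <= n)%N ->
         linear_fun (B k) (kappa_coef L nu h Rlam k) /\
         bounded_fun (B k) (normk N k) (kappa_coef L nu h Rlam k)),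
      (forall k, (k <= n)%N ->
         fun_norm_to0 (B k.+1) (normk N k.+1)
           (fun eps f => eps ^- k * (nueps eps f / nueps eps h - nu f
                          - \sum_(1 <= i < k.+1) kappa_coef L nu h Rlam i f * eps ^+ i)))
    & forall one : V, one \in B n.+1 -> nu one = 1 ->
        (forall eps, 0 < eps -> eps < 1 -> nueps eps one = 1) ->
        (exists C, forall eps, 0 < eps -> eps < 1 -> `|nueps eps h| <= C) ->
        (forall k, (k <= n)%N ->
           linear_fun (B k) (nu_coef L nu h Rlam one k) /\
           bounded_fun (B k) (normk N k) (nu_coef L nu h Rlam one k)) /\
        (forall k, (k <= n)%N ->
           fun_norm_to0 (B k.+1) (normk N k.+1)
             (fun eps f => eps ^- k * (nueps eps f
                - \sum_(0 <= i < k.+1) nu_coef L nu h Rlam one i f * eps ^+ i)))].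
Proof.
move=> *; split=> [k le_kn | k le_kn | one one_B nu_one nueps_one [Ch nueps_h_bd]].
- by split; [eapply kappa_coef_linear | eapply kappa_coef_bounded]; eassumption.
- by eapply kappa_expansion; eassumption.
- split=> k le_kn; last by eapply nu_expansion; eassumption.
  by split; [eapply nu_coef_linear | eapply nu_coef_bounded]; eassumption.
Qed.
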